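(* Let $(\tilde\Theta^n_I)$ be a congruent family of covariant $n$-tensor fields on $\mathcal M_+(I)$, $I$ ranging over finite sets, let $I$ be a finite set and $\lambda>0$. If $\vec i=(i_1,\dots,i_n),\vec j=(j_1,\dots,j_n)\in I^n$ are multiindices with $\mathbf P(\vec i)=\mathbf P(\vec j)$, then $$(\tilde\Theta^n_I)_{\lambda c_I}(\delta_{i_1},\dots,\delta_{i_n})=(\tilde\Theta^n_I)_{\lambda c_I}(\delta_{j_1},\dots,\delta_{j_n}).$$
   Context: For a finite set $I$: $\mathcal S(I)=\{\sum_{i\in I}x_i\delta_i:x_i\in\mathbb R\}$, $\mathcal M_+(I)=\{\sum\mu_i\delta_i:\mu_i>0\}$ (an open subset with tangent space $\mathcal S(I)$), and $c_I:=\frac1{|I|}\sum_{i\in I}\delta_i$. A covariant $n$-tensor field on $\mathcal M_+(I)$ is a continuously varying family of $n$-multilinear forms on $\mathcal S(I)$. A Markov kernel $K:I\to\mathcal P(I')$ between finite sets is a stochastic matrix $K(i)=\sum_{i'}K^i_{i'}\delta_{i'}$, with $K_*(\sum x_i\delta_i)=\sum_{i,i'}K^i_{i'}x_i\delta_{i'}$; it is congruent if there is a map $\kappa:I'\to I$ with $K^i_{i'}=0$ whenever $\kappa(i')\ne i$. The family is congruent if $(\tilde\Theta^n_{I'})_{K_*\mu}(K_*V_1,\dots,K_*V_n)=(\tilde\Theta^n_I)_\mu(V_1,\dots,V_n)$ for every congruent Markov kernel $K:I\to\mathcal P(I')$ between finite sets with $K_*(\mathcal M_+(I))\subset\mathcal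 M_+(I')$. For a multiindex $\vec i\in I^n$, $\mathbf P(\vec i)$ is the partition of $\{1,\dots,n\}$ into the equivalence classes of $k\sim l\iff i_k=i_l$. *)

From HB Require Import structures.
From mathcomp Require Import all_boot all_order all_algebra.
From mathcomp Require Import all_classical all_reals all_analysis.
Set Implicit Arguments. Unset Strict Implicit. Unset Printing Implicit Defensive.
Import Order.TTheory GRing.Theory Num.Theory.
Import numFieldNormedType.Exports.
Local Open Scope ring_scope.
Local Open Scope classical_set_scope.

(* S(I) is modelled by I -> R (x = sum_i x_i delta_i);
   M_+(I) is the set of mu : I -> R with all mu i > 0. *)
Definition Mplus (R : realType) (I : finType) : set (I -> R) :=
  [set mu | forall i, 0 < mu i].

Definition delta (R : realType) (I : finType) (i : I) : I -> R :=
  fun j => (j == i)%:R.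

Definition cI (R : realType) (I : finType) : I -> R :=
  fun _ => (#|I|%:R)^-1.

Definition tensor_family (R : realType) (n : nat) :=
  forall I : finType, (I -> R) -> ('I_n -> (I -> R)) -> R.

Definition upd (R : realType) (I : finType) (n : nat)
  (V : 'I_n -> (I -> R)) (k : 'I_n) (x : I -> R) : 'I_n -> (I -> R) :=
  fun l => if l == k then x else V l.

Definition multilinear (R : realType) (I : finType) (n : nat)
  (F : ('I_n -> (I -> R)) -> R) : Prop :=
  forall (V : 'I_n -> (I -> R)) (k : 'I_n) (a : R) (x y : I -> R),
    F (upd V k (fun i => a * x i + y i)) = a * F (upd V k x) + F (upd V k y).

Definition tensor_field (R : realType) (n : nat) (I : finType)
  (T : (I -> R) -> ('I_n -> (I -> R)) -> R) : Prop :=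
  (forall mu, @Mplus R I mu -> multilinear (T mu)) /\
  (forall V : 'I_n -> (I -> R), {within (@Mplus R I : set {ptws I -> R}), continuous (fun mu : {ptws I -> R} => T mu V)}).

Definition markov_kernel (R : realType) (I I' : finType) (K : I -> I' -> R) : Prop :=
  (forall i i', 0 <= K i i') /\ (forall i, \sum_(i' : I') K i i' = 1).

Definition congruent_kernel (R : realType) (I I' : finType) (K : I -> I' -> R) : Prop :=
  markov_kernel K /\
  exists kappa : I' -> I, forall i i', kappa i' != i -> K i i' = 0.

Definition pushforward (R : realType) (I I' : finType) (K : I -> I' -> R)
  (x : I -> R) : I' -> R :=
  fun i' => \sum_(i : I) K i i' * x i.

Definition congruent_family (R : realType) (n : nat) (Theta : tensor_family R n) : Prop :=
  forall (I I' : finType) (K : I -> I' -> R),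
    congruent_kernel K ->
    (forall mu, @Mplus R I mu -> @Mplus R I' (pushforward K mu)) ->
    forall mu, @Mplus R I mu ->
    forall V : 'I_n -> (I -> R),
      Theta I' (pushforward K mu) (fun k => pushforward K (V k)) = Theta I mu V.

Definition Ppart (I : finType) (n : nat) (iv : 'I_n -> I) : {set {set 'I_n}} :=
  ([set ([set l | iv l == iv k])%SET | k : 'I_n])%SET.

From Pilot Require Import Defs.
From HB Require Import structures.
From mathcomp Require Import all_boot all_order all_algebra.
From mathcomp Require Import all_classical all_reals all_analysis.
From mathcomp Require Import perm.
Import Order.TTheory GRing.Theory Num.Theory.

(* Equal partitions P(i) = P(j) mean that i_k = i_l iff j_k = j_l, so i_k |-> j_k is a
   well-defined injection, which extends to a permutation s of I.  The kernel
   K(i) = delta_{s i} is congruent, its push-forward is composition with s^-1, it fixes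
   the uniform measure lambda c_I, and it sends delta_{i_k} to delta_{j_k}. *)

Set Implicit Arguments.
Unset Strict Implicit.
Unset Printing Implicit Defensive.
Local Open Scope ring_scope.

Lemma leq_card_inj_in (T : finType) (A B : {set T}) : (#|A| <= #|B|)%N ->
  exists2 h : T -> T, {in A &, injective h} & {in A, forall x, h x \in B}.
Proof.
move=> leAB; pose h x := nth x (enum B) (index x (enum A)).
have idxB x : x \in A -> (index x (enum A) < size (enum B))%N.
  by move=> xA; rewrite -cardE (leq_trans _ leAB) // cardE index_mem mem_enum.
exists h => [x y xA yA | x xA]; last by rewrite -mem_enum mem_nth ?idxB.
rewrite /h (set_nth_default y x (idxB _ xA)) => /eqP.
rewrite nth_uniq ?idxB ?enum_uniq // => /eqP e.
by apply: (index_inj x) e; rewrite mem_enum.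
Qed.

Lemma inj_in_perm_extend (T : finType) (A : {set T}) (f : T -> T) :
  {in A &, injective f} -> exists s : {perm T}, {in A, s =1 f}.
Proof.
move=> finj.
have leC : (#|~: A| <= #|~: (f @: A)|)%N.
  by rewrite -(leq_add2l #|A|) cardsC -{1}(card_in_imset finj) cardsC.
have [h hinj hC] := leq_card_inj_in leC.
have hA x y : x \in A -> y \notin A -> f x != h y.
  move=> xA yA; apply: contraTneq (hC y _) => [<-|]; last by rewrite inE.
  by rewrite inE negbK imset_f.
pose g x := if x \in A then f x else h x.
have ginj : injective g.
  move=> x y; rewrite /g; case: ifPn => xA; case: ifPn => yA.
  - exact: finj.
  - by move/eqP; rewrite (negbTE (hA _ _ xA yA)).
  - by move/esym/eqP; rewrite (negbTE (hA _ _ yA xA)).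
  - by apply: hinj; rewrite inE.
by exists (perm ginj) => x xA; rewrite permE /g xA.
Qed.

Lemma perm_of_same_kernel (J T : finType) (iv jv : J -> T) :
  (forall k l, (iv k == iv l) = (jv k == jv l)) ->
  exists s : {perm T}, forall k, s (iv k) = jv k.
Proof.
move=> ker; pose g x := if [pick k | iv k == x] is Some k then jv k else x.
have giv k : g (iv k) = jv k.
  rewrite /g; case: pickP => [m /eqP e|/(_ k)]; last by rewrite eqxx.
  by apply/eqP; rewrite -ker e.
have ginj : {in iv @: [set: J] &, injective g}.
  move=> _ _ /imsetP[k _ ->] /imsetP[l _ ->].
  by rewrite !giv => /eqP; rewrite -ker => /eqP.
have [s sg] := inj_in_perm_extend ginj.
by exists s => k; rewrite sg ?giv // imset_f ?inE.
Qed.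

Lemma Ppart_same_block (I : finType) (n : nat) (iv : 'I_n -> I) k l :
  (iv k == iv l) = [exists S in Ppart iv, (k \in S) && (l \in S)].
Proof.
apply/idP/existsP => [e | [_ /andP[/imsetP[m _ ->]]]].
  by exists [set l | iv l == iv k]; rewrite imset_f //= !inE eqxx eq_sym e.
by rewrite !inE => /andP[/eqP -> /eqP ->].
Qed.

Lemma eq_kernel_of_Ppart (I : finType) (n : nat) (iv jv : 'I_n -> I) :
  Ppart iv = Ppart jv -> forall k l, (iv k == iv l) = (jv k == jv l).
Proof. by move=> hP k l; rewrite !Ppart_same_block hP. Qed.

Section PermKernel.
Variables (R : realType) (I : finType) (s : {perm I}).

Definition perm_kernel (i i' : I) : R := (i' == s i)%:R.

Lemma pushforward_perm_kernel (x : I -> R) :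
  Defs.pushforward perm_kernel x = x \o (s^-1)%g.
Proof.
apply: funext => i'; rewrite /Defs.pushforward (bigD1 ((s^-1)%g i')) //=.
rewrite /perm_kernel permKV eqxx mul1r big1 ?addr0 // => i /negbTE ne.
by rewrite eq_sym (canF_eq (permK s)) ne mul0r.
Qed.

Lemma congruent_perm_kernel : congruent_kernel perm_kernel.
Proof.
split; [split|].
- by move=> i i'; rewrite ler0n.
- by move=> i; rewrite (bigD1 (s i)) //= /perm_kernel eqxx big1 ?addr0 // => j /negbTE ->.
- exists (s^-1)%g => i i' ne.
  by rewrite /perm_kernel eq_sym (canF_eq (permK s)) eq_sym (negbTE ne).
Qed.

Lemma Mplus_pushforward_perm_kernel (mu : I -> R) :
  Mplus mu -> Mplus (Defs.pushforward perm_kernel mu).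
Proof. by rewrite pushforward_perm_kernel => mu_gt0 i; apply: mu_gt0. Qed.

Lemma delta_comp_permV (i : I) : @delta R _ i \o (s^-1)%g = @delta R _ (s i).
Proof. by apply: funext => j; rewrite /delta /= (canF_eq (permKV s)). Qed.

End PermKernel.

Lemma congruent_family_perm (R : realType) (n : nat) (Theta : tensor_family R n) :
  congruent_family Theta ->
  forall (I : finType) (s : {perm I}) (mu : I -> R) (V : 'I_n -> I -> R),
  Mplus mu -> Theta I (mu \o (s^-1)%g) (fun k => V k \o (s^-1)%g) = Theta I mu V.
Proof.
move=> cong I s mu V mu_gt0; rewrite -pushforward_perm_kernel.
under eq_fun do rewrite -pushforward_perm_kernel.
exact: cong (congruent_perm_kernel R s) (@Mplus_pushforward_perm_kernel R I s) _ _ _.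
Qed.

Lemma Mplus_scale_cI (R : realType) (I : finType) (lambda : R) :
  0 < lambda -> Mplus (fun i => lambda * @cI R I i).
Proof.
by move=> lambda_gt0 i; rewrite mulr_gt0 // invr_gt0 ltr0n; apply/card_gt0P; exists i.
Qed.

Theorem lemma4p5 (R : realType) (n : nat) (Theta : tensor_family R n)
  (Hfield : forall I : finType, tensor_field (Theta I))
  (Hcong : congruent_family Theta)
  (I : finType) (lambda : R) (hl : 0 < lambda) (iv jv : 'I_n -> I)
  (hP : Ppart iv = Ppart jv) :
  Theta I (fun x => lambda * @cI R I x) (fun k => @delta R _ (iv k))
  = Theta I (fun x => lambda * @cI R I x) (fun k => @delta R _ (jv k)).
Proof.
have [s s_iv] := perm_of_same_kernel (eq_kernel_of_Ppart hP).
rewrite -(congruent_family_perm Hcong s _ (Mplus_scale_cI (I := I) hl)) /=.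
by congr (Theta I _ _); apply: funext => k; rewrite delta_comp_permV s_iv.
Qed.
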